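(* The group $Fr(162\times 4)$ is not isomorphic to the group $\Sigma(216\times 3)$ (which also has order $648$).
   Context: Let $\omega=e^{2i\pi/3}$, $\varepsilon=e^{4i\pi/9}$, $J$ the $3\times3$ antidiagonal matrix with antidiagonal entries $1$. $G_1=\mathrm{diag}(e^{7i\pi/9},-e^{4i\pi/9},-e^{7i\pi/9})$, $G_2=\begin{pmatrix}-\tfrac12 e^{4i\pi/9}&\tfrac{1}{\sqrt2}e^{7i\pi/9}&\tfrac12 e^{4i\pi/9}\\ \tfrac{1}{\sqrt2}e^{7i\pi/9}&0&\tfrac{1}{\sqrt2}e^{7i\pi/9}\\ \tfrac12 e^{4i\pi/9}&\tfrac{1}{\sqrt2}e^{7i\pi/9}&-\tfrac12 e^{4i\pi/9}\end{pmatrix}$, $FUM=-\omega J$, $Fr(162\times 4)=\langle G_1,G_2,FUM\rangle\subset SU(3)$. $\Sigma(216\times 3)$ is the subgroup of $SU(3)$ generated by $D=\mathrm{diag}(\varepsilon,\varepsilon,\varepsilon\omega)$ and $V=\frac{1}{i\sqrt3}\begin{pmatrix}1&1&1\\1&\omega&\omega^2\\1&\omega^2&\omega\end{pmatrix}$. *)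

From HB Require Import structures.
From mathcomp Require Import all_boot all_order all_algebra all_field.
Set Implicit Arguments. Unset Strict Implicit. Unset Printing Implicit Defensive.
Import Order.TTheory GRing.Theory Num.Theory.
Local Open Scope ring_scope.

(* zeta = e^{i pi/9}: the 9th root of -1 with minimal nonnegative argument *)
Definition zeta : algC := 9.-root (-1).
Definition omega : algC := zeta ^+ 6.
Definition eps : algC := zeta ^+ 4.
Definition e7 : algC := zeta ^+ 7.
Definition e4 : algC := zeta ^+ 4.

Definition mx3 (a b c d e f g h k : algC) : 'M[algC]_3 :=
  \matrix_(i < 3, j < 3)
    nth 0 (nth [::] [:: [:: a; b; c]; [:: d; e; f]; [:: g; h; k]] i) j.

Definition Jmx : 'M[algC]_3 := mx3 0 0 1 0 1 0 1 0 0.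

Definition G1 : 'M[algC]_3 := mx3 e7 0 0  0 (- e4) 0  0 0 (- e7).
Definition G2 : 'M[algC]_3 :=
  let s := (sqrtC 2)^-1 in
  mx3 (- (e4 / 2)) (s * e7) (e4 / 2)
      (s * e7) 0 (s * e7)
      (e4 / 2) (s * e7) (- (e4 / 2)).
Definition FUM : 'M[algC]_3 := - omega *: Jmx.

Definition Dmx : 'M[algC]_3 := mx3 eps 0 0  0 eps 0  0 0 (eps * omega).
Definition Vmx : 'M[algC]_3 :=
  ('i * sqrtC 3)^-1 *: mx3 1 1 1  1 omega (omega ^+ 2)  1 (omega ^+ 2) omega.

Inductive gen_by (S : seq 'M[algC]_3) : 'M[algC]_3 -> Prop :=
| gen_mem x : x \in S -> gen_by S x
| gen_one : gen_by S 1%:M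
| gen_mul x y : gen_by S x -> gen_by S y -> gen_by S (x *m y)
| gen_inv x : gen_by S x -> gen_by S (invmx x).

Definition Fr162x4 : 'M[algC]_3 -> Prop := gen_by [:: G1; G2; FUM].
Definition Sigma216x3 : 'M[algC]_3 -> Prop := gen_by [:: Dmx; Vmx].

Definition isomorphic (A B : 'M[algC]_3 -> Prop) : Prop :=
  exists f : 'M[algC]_3 -> 'M[algC]_3,
    (forall x, A x -> B (f x)) /\
    (forall x y, A x -> A y -> f (x *m y) = f x *m f y) /\
    (forall x y, A x -> A y -> f x = f y -> x = y) /\
    (forall z, B z -> exists2 x, A x & f x = z).

From HB Require Import structures.
From Stdlib Require Import ZArith.
From mathcomp Require Import all_boot all_order all_algebra all_field.
From mathcomp Require Import ssrZ ring lra.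
Import Order.TTheory GRing.Theory Num.Theory.

Set Implicit Arguments.
Unset Strict Implicit.
Unset Printing Implicit Defensive.

(* Fr(162x4) and Sigma(216x3) are not isomorphic because they have different
   element orders: G1 * FUM in Fr(162x4) is killed by neither its 12th nor its
   18th power (it has order 36), while every element z of Sigma(216x3) satisfies
   z^12 = 1 or z^18 = 1.  An isomorphism would transport the latter identities
   back to Fr(162x4) (iso_exponent).

   All entries live in Q(zeta), zeta = e^{i pi/9} = 9.-root (-1).  We first show
   by an elementary argument on real parts that zeta^6 <> 1 (zeta6_neq1), so
   that y = zeta^2 is a root of the ninth cyclotomic polynomial y^6 + y^3 + 1.
   The entries of D and V lie in (1/3) Z[y]; we encode such numbers by integer
   coefficient vectors with exact arithmetic modulo y^6 + y^3 + 1, compute by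
   vm_compute the 648 elements of the group, and check that this list contains
   1, is closed under right multiplication by D and V and consists of elements
   killed by the 12th or the 18th power.  An evaluation map into algC turns this
   certificate into the statement about Sigma(216x3) (certified_exponent); the
   sign ambiguity of 1/(i sqrt 3) is absorbed by working up to sign.  On the
   Fr(162x4) side, (G1 FUM)^2 is diagonal, which makes its powers explicit. *)

Local Open Scope Z_scope.

(* [Cyc a0 a1 a2 a3 a4 a5] encodes (a0 + a1 y + ... + a5 y^5) / 3, where y is a
   root of y^6 + y^3 + 1; the denominator 3 is needed for the entries of V. *)
Record cyc := Cyc { cf0 : Z; cf1 : Z; cf2 : Z; cf3 : Z; cf4 : Z; cf5 : Z }.

(* Decidable equality, kept transparent so that vm_compute can use it. *)
Definition cyc_eq_dec : comparable cyc.
Proof. by move=> a b; rewrite /decidable; decide equality; apply: Z.eq_dec. Defined.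
HB.instance Definition _ := hasDecEq.Build cyc (compareP cyc_eq_dec).

Definition cyc0 : cyc := Cyc 0 0 0 0 0 0.
Definition cyc1 : cyc := Cyc 3 0 0 0 0 0.

Definition cyc_add (a b : cyc) : cyc :=
  Cyc (cf0 a + cf0 b) (cf1 a + cf1 b) (cf2 a + cf2 b)
      (cf3 a + cf3 b) (cf4 a + cf4 b) (cf5 a + cf5 b).

(* Three times the product: the product of the numerators, reduced modulo
   y^6 + y^3 + 1 (y^6 = -y^3 - 1, ..., y^9 = 1, y^10 = y). *)
Definition cyc_mul_num (a b : cyc) : cyc :=
  let: Cyc a0 a1 a2 a3 a4 a5 := a in
  let: Cyc b0 b1 b2 b3 b4 b5 := b in
  let d6 := a1*b5 + a2*b4 + a3*b3 + a4*b2 + a5*b1 in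
  let d7 := a2*b5 + a3*b4 + a4*b3 + a5*b2 in
  let d8 := a3*b5 + a4*b4 + a5*b3 in
  let d9 := a4*b5 + a5*b4 in
  let d10 := a5*b5 in
  Cyc (a0*b0 - d6 + d9)
      (a0*b1 + a1*b0 - d7 + d10)
      (a0*b2 + a1*b1 + a2*b0 - d8)
      (a0*b3 + a1*b2 + a2*b1 + a3*b0 - d6)
      (a0*b4 + a1*b3 + a2*b2 + a3*b1 + a4*b0 - d7)
      (a0*b5 + a1*b4 + a2*b3 + a3*b2 + a4*b1 + a5*b0 - d8).

(* Exact division by 3, meaningful when every coefficient is divisible. *)
Definition div3_ok (k : Z) : bool := Z.eqb (k mod 3) 0.
Definition cyc_div3_ok (a : cyc) : bool :=
  [&& div3_ok (cf0 a), div3_ok (cf1 a), div3_ok (cf2 a),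
      div3_ok (cf3 a), div3_ok (cf4 a) & div3_ok (cf5 a)].
Definition cyc_div3 (a : cyc) : cyc :=
  Cyc (cf0 a / 3) (cf1 a / 3) (cf2 a / 3) (cf3 a / 3) (cf4 a / 3) (cf5 a / 3).

Record mat := Mat { e00 : cyc; e01 : cyc; e02 : cyc; e10 : cyc; e11 : cyc;
                    e12 : cyc; e20 : cyc; e21 : cyc; e22 : cyc }.

Definition mat_eq_dec : comparable mat.
Proof. by move=> A B; rewrite /decidable; decide equality; apply: cyc_eq_dec. Defined.
HB.instance Definition _ := hasDecEq.Build mat (compareP mat_eq_dec).

Definition mat1 : mat := Mat cyc1 cyc0 cyc0 cyc0 cyc1 cyc0 cyc0 cyc0 cyc1.

Definition dot3 (a1 a2 a3 b1 b2 b3 : cyc) : cyc :=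
  cyc_add (cyc_add (cyc_mul_num a1 b1) (cyc_mul_num a2 b2)) (cyc_mul_num a3 b3).

(* Three times the matrix product, entrywise. *)
Definition mat_mul_num (A B : mat) : mat :=
  let: Mat a00 a01 a02 a10 a11 a12 a20 a21 a22 := A in
  let: Mat b00 b01 b02 b10 b11 b12 b20 b21 b22 := B in
  Mat (dot3 a00 a01 a02 b00 b10 b20) (dot3 a00 a01 a02 b01 b11 b21)
      (dot3 a00 a01 a02 b02 b12 b22) (dot3 a10 a11 a12 b00 b10 b20)
      (dot3 a10 a11 a12 b01 b11 b21) (dot3 a10 a11 a12 b02 b12 b22)
      (dot3 a20 a21 a22 b00 b10 b20) (dot3 a20 a21 a22 b01 b11 b21)
      (dot3 a20 a21 a22 b02 b12 b22).

Definition mat_map (f : cyc -> cyc) (A : mat) : mat :=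
  let: Mat a b c d e g h i j := A in Mat (f a) (f b) (f c) (f d) (f e) (f g) (f h) (f i) (f j).
Definition mat_all (p : cyc -> bool) (A : mat) : bool :=
  let: Mat a b c d e g h i j := A in [&& p a, p b, p c, p d, p e, p g, p h, p i & p j].

(* Unchecked product, used only to enumerate the group. *)
Definition mat_mul (A B : mat) : mat := mat_map cyc_div3 (mat_mul_num A B).

Definition mat_mulc (A B : mat) : option mat :=
  let N := mat_mul_num A B in
  if mat_all cyc_div3_ok N then Some (mat_map cyc_div3 N) else None.

Fixpoint mat_powc (A : mat) (n : nat) : option mat :=
  if n is n'.+1 then obind (mat_mulc A) (mat_powc A n') else Some mat1.

(* Closes [todo] under right multiplication by [gens], recording every matrix
   met in [seen]; nothing is proved about it, its output is only a candidate. *)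
Fixpoint right_closure (fuel : nat) (gens seen todo : seq mat) : seq mat :=
  if fuel is fuel'.+1 then
    if todo is A :: todo' then
      let visit acc g :=
        let B := mat_mul A g in
        if B \in acc.1 then acc else (B :: acc.1, B :: acc.2) in
      let: (seen', todo'') := foldl visit (seen, todo') gens in
      right_closure fuel' gens seen' todo''
    else seen
  else seen.

Definition certificate (m n : nat) (S gens : seq mat) : bool :=
  (mat1 \in S) &&
  all (fun A => all (fun g => if mat_mulc A g is Some B then B \in S else false) gens
                && ((mat_powc A m == Some mat1) || (mat_powc A n == Some mat1))) S.

(* Codes of D = diag(y^2, y^2, y^5) and V = c [[1,1,1],[1,w,w^2],[1,w^2,w]], where
   w = y^3 and c = -(1 + 2w)/3 = +-1/(i sqrt 3). *)
Definition D0 : mat :=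
  let e := Cyc 0 0 3 0 0 0 in
  Mat e cyc0 cyc0 cyc0 e cyc0 cyc0 cyc0 (Cyc 0 0 0 0 0 3).

Definition V0 : mat :=
  let c := Cyc (-1) 0 0 (-2) 0 0 in
  let cw := Cyc 2 0 0 1 0 0 in
  let cw2 := Cyc (-1) 0 0 1 0 0 in
  Mat c c c c cw cw2 c cw2 cw.

Definition sigma_list : seq mat := right_closure 1000 [:: D0; V0] [:: mat1] [:: mat1].

Lemma sigma_certificate : certificate 12 18 sigma_list [:: D0; V0].
Proof. vm_cast_no_check (erefl true). Qed.

Local Close Scope Z_scope.

Local Open Scope ring_scope.

Definition zr (k : Z) : algC := (int_of_Z k)%:~R.

Lemma zrD a b : zr (Z.add a b) = zr a + zr b.
Proof. by rewrite /zr -[Z.add a b]/(a + b) raddfD intrD. Qed.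

Lemma zrN a : zr (Z.opp a) = - zr a.
Proof. by rewrite /zr -[Z.opp a]/(- a) raddfN mulrNz. Qed.

Lemma zrB a b : zr (Z.sub a b) = zr a - zr b.
Proof. by rewrite -[Z.sub a b]/(Z.add a (Z.opp b)) zrD zrN. Qed.

Lemma zrM a b : zr (Z.mul a b) = zr a * zr b.
Proof. by rewrite /zr -[Z.mul a b]/(a * b) rmorphM intrM. Qed.

Lemma zr_div3 k : div3_ok k -> zr (Z.div k 3) = zr k / 3.
Proof.
move=> /Z.eqb_eq k3; have ek := proj2 (Z.div_exact k 3 ltac:(by [])) k3.
by rewrite [in RHS]ek zrM (_ : zr 3 = 3) //; field.
Qed.

Definition ev_cyc (y : algC) (a : cyc) : algC :=
  (zr (cf0 a) + zr (cf1 a) * y + zr (cf2 a) * y ^+ 2 + zr (cf3 a) * y ^+ 3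
   + zr (cf4 a) * y ^+ 4 + zr (cf5 a) * y ^+ 5) / 3.

Lemma mx3_mul (a00 a01 a02 a10 a11 a12 a20 a21 a22 : algC)
    (b00 b01 b02 b10 b11 b12 b20 b21 b22 : algC) :
  mx3 a00 a01 a02 a10 a11 a12 a20 a21 a22 *m mx3 b00 b01 b02 b10 b11 b12 b20 b21 b22 =
  mx3 (a00*b00 + a01*b10 + a02*b20) (a00*b01 + a01*b11 + a02*b21) (a00*b02 + a01*b12 + a02*b22)
      (a10*b00 + a11*b10 + a12*b20) (a10*b01 + a11*b11 + a12*b21) (a10*b02 + a11*b12 + a12*b22)
      (a20*b00 + a21*b10 + a22*b20) (a20*b01 + a21*b11 + a22*b21) (a20*b02 + a21*b12 + a22*b22).
Proof.
apply/matrixP => i j; rewrite !mxE !big_ord_recr big_ord0 /= !mxE.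
by case: i => [[|[|[|i]]] Hi] //=; case: j => [[|[|[|j]]] Hj] //=; ring.
Qed.

Lemma mx3_scale (c a00 a01 a02 a10 a11 a12 a20 a21 a22 : algC) :
  c *: mx3 a00 a01 a02 a10 a11 a12 a20 a21 a22 =
  mx3 (c*a00) (c*a01) (c*a02) (c*a10) (c*a11) (c*a12) (c*a20) (c*a21) (c*a22).
Proof.
apply/matrixP => i j; rewrite !mxE.
by case: i => [[|[|[|i]]] Hi] //=; case: j => [[|[|[|j]]] Hj].
Qed.

Lemma mx3_1 : mx3 1 0 0 0 1 0 0 0 1 = 1%:M.
Proof.
apply/matrixP => i j; rewrite !mxE.
by case: i => [[|[|[|i]]] Hi] //=; case: j => [[|[|[|j]]] Hj].
Qed.

Definition ev_mat (y : algC) (A : mat) : 'M[algC]_3 :=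
  mx3 (ev_cyc y (e00 A)) (ev_cyc y (e01 A)) (ev_cyc y (e02 A))
      (ev_cyc y (e10 A)) (ev_cyc y (e11 A)) (ev_cyc y (e12 A))
      (ev_cyc y (e20 A)) (ev_cyc y (e21 A)) (ev_cyc y (e22 A)).

Section Evaluation.
Variable y : algC.
Hypothesis y_cyclo : y ^+ 6 + y ^+ 3 + 1 = 0.

Lemma ev_cyc_add a b : ev_cyc y (cyc_add a b) = ev_cyc y a + ev_cyc y b.
Proof. by case: a; case: b => *; rewrite /ev_cyc /= !zrD; field. Qed.

Lemma ev_cyc_mul_num a b : ev_cyc y (cyc_mul_num a b) = 3 * (ev_cyc y a * ev_cyc y b).
Proof.
case: a => a0 a1 a2 a3 a4 a5; case: b => b0 b1 b2 b3 b4 b5.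
rewrite /ev_cyc /cyc_mul_num /= !(zrB, zrD, zrM).
move: (zr a0) (zr a1) (zr a2) (zr a3) (zr a4) (zr a5) => A0 A1 A2 A3 A4 A5.
move: (zr b0) (zr b1) (zr b2) (zr b3) (zr b4) (zr b5) => B0 B1 B2 B3 B4 B5.
apply/eqP; rewrite -subr_eq0; apply/eqP.
transitivity (- (y ^+ 6 + y ^+ 3 + 1) *
  ((A1*B5 + A2*B4 + A3*B3 + A4*B2 + A5*B1) + (A2*B5 + A3*B4 + A4*B3 + A5*B2) * y
   + (A3*B5 + A4*B4 + A5*B3) * y ^+ 2 + (A4*B5 + A5*B4) * (y ^+ 3 - 1)
   + A5*B5 * (y ^+ 4 - y)) / 3); first by field.
by rewrite y_cyclo oppr0 !mul0r.
Qed.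

Lemma ev_cyc_div3 a : cyc_div3_ok a -> ev_cyc y (cyc_div3 a) = ev_cyc y a / 3.
Proof.
case: a => a0 a1 a2 a3 a4 a5 /and5P[h0 h1 h2 h3 /andP[h4 h5]].
by rewrite /ev_cyc /= !zr_div3 //; field.
Qed.

Lemma ev_mat1 : ev_mat y mat1 = 1%:M.
Proof. by rewrite -mx3_1 /ev_mat /ev_cyc /=; congr mx3; field. Qed.

Lemma ev_mat_mulc A B C :
  mat_mulc A B = Some C -> ev_mat y C = ev_mat y A *m ev_mat y B.
Proof.
rewrite /mat_mulc; case: ifP => // ok [<-].
case: A ok => a00 a01 a02 a10 a11 a12 a20 a21 a22.
case: B => b00 b01 b02 b10 b11 b12 b20 b21 b22 /=.
move=> /and5P[o00 o01 o02 o10 /and5P[o11 o12 o20 o21 o22]].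
rewrite /ev_mat /= mx3_mul !ev_cyc_div3 // /dot3 !ev_cyc_add !ev_cyc_mul_num.
by congr mx3; field.
Qed.

Lemma ev_mat_powc A n P : mat_powc A n = Some P -> ev_mat y P = ev_mat y A ^+ n.
Proof.
elim: n P => [|n IH] P /=; first by move=> [<-]; rewrite ev_mat1.
case eAn: (mat_powc A n) => [Q|] //= /ev_mat_mulc ->.
by rewrite (IH Q eAn) exprS.
Qed.

End Evaluation.

(* Real and imaginary parts as elements of the real closed field algR, where
   lra and nra are available. *)
Definition re (u : algC) : algR := in_algR (Creal_Re u).
Definition im (u : algC) : algR := in_algR (Creal_Im u).

Lemma re_cube u : re (u ^+ 3) = re u ^+ 3 - 3 * re u * im u ^+ 2.
Proof.
apply: val_inj; change ('Re (u ^+ 3) = algRval (re u ^+ 3 - 3 * re u * im u ^+ 2)).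
rewrite !(rmorphB, rmorphM, rmorphXn, rmorph_nat) /=.
by rewrite exprS ReM expr2 ReM ImM; ring.
Qed.

Lemma im_cube u : im (u ^+ 3) = 3 * re u ^+ 2 * im u - im u ^+ 3.
Proof.
apply: val_inj; change ('Im (u ^+ 3) = algRval (3 * re u ^+ 2 * im u - im u ^+ 3)).
rewrite !(rmorphB, rmorphM, rmorphXn, rmorph_nat) /=.
by rewrite exprS ImM expr2 ReM ImM; ring.
Qed.

Lemma unit_circle {u : algC} {n : nat} : (0 < n)%N -> u ^+ n = -1 -> re u ^+ 2 + im u ^+ 2 = 1.
Proof.
move=> n_gt0 un; have : `|u| ^+ n = 1 by rewrite -normrX un normrN normr1.
move/eqP; rewrite pexpr_eq1 // => /eqP u1.
apply: val_inj; change (algRval (re u ^+ 2 + im u ^+ 2) = algRval 1).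
by rewrite rmorphD !rmorphXn rmorph1 /= -normC2_Re_Im u1 expr1n.
Qed.

(* If cos 3t = 1/2 and cos t <= 1/2 then cos t < 0 (the solutions of
   4a^3 - 3a = 1/2 are cos(pi/9), cos(5pi/9) and cos(7pi/9)). *)
Lemma triple_half_neg {a b : algR} :
  a <= 1/2 -> a ^+ 2 + b ^+ 2 = 1 -> a ^+ 3 - 3 * a * b ^+ 2 = 1/2 -> a < 0.
Proof.
move=> a_le ab1 cos3; have cubic : 4 * a ^+ 3 - 3 * a = 1/2.
  by rewrite -cos3 (_ : b ^+ 2 = 1 - a ^+ 2); [ring | lra].
rewrite ltNge; apply/negP => a_ge0.
have : 0 <= a * (1/4 - a ^+ 2) by apply: mulr_ge0 => //; nra.
nra.
Qed.

Lemma lower_half_le {a b : algR} :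
  b < 0 -> 0 <= 3 * a ^+ 2 * b - b ^+ 3 -> a ^+ 2 + b ^+ 2 = 1 -> a <= 1/2.
Proof.
move=> b_lt0 sin3 ab1; have : 3 * a ^+ 2 - b ^+ 2 <= 0.
  by move: sin3; rewrite (_ : _ - _ = b * (3 * a ^+ 2 - b ^+ 2)); [rewrite nmulr_rge0 | ring].
nra.
Qed.

Lemma triple_neg1 {a b : algR} :
  1/2 <= a -> a ^+ 2 + b ^+ 2 = 1 -> a ^+ 3 - 3 * a * b ^+ 2 = -1 -> a = 1/2.
Proof.
move=> a_ge ab1 cos3; have cubic : 4 * a ^+ 3 - 3 * a = -1.
  by rewrite -cos3 (_ : b ^+ 2 = 1 - a ^+ 2); [ring | lra].
have : (a + 1) * (2 * a - 1) ^+ 2 = 0.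
  have -> : (a + 1) * (2 * a - 1) ^+ 2 = 4 * a ^+ 3 - 3 * a + 1 by ring.
  by rewrite cubic addNr.
by move/eqP; rewrite mulf_eq0 expf_eq0 /= => /orP[] /eqP; lra.
Qed.

Definition w3 : algC := (-1 + 'i * sqrtC 3) / 2.

Lemma w3_root : 1 + w3 + w3 ^+ 2 = 0.
Proof.
have -> : 1 + w3 + w3 ^+ 2 = (3 + 'i ^+ 2 * sqrtC 3 ^+ 2) / 4 by rewrite /w3; field.
by rewrite sqrCi sqrtCK mulN1r subrr mul0r.
Qed.

Lemma w3_cube : w3 ^+ 3 = 1.
Proof.
have -> : w3 ^+ 3 = (1 + w3 + w3 ^+ 2) * (w3 - 1) + 1 by ring.
by rewrite w3_root mul0r add0r.
Qed.

(* zeta has maximal real part among the 9th roots of -1 in the upper half-plane;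
   one of them is 1 + w3 = e^{i pi/3}. *)
Lemma re_zeta_ge_half : 1/2 <= re zeta.
Proof.
have r_half : (1/2 : algC) \is Creal by rewrite rpred_div ?rpred1 ?rpred_nat.
have s3_ge0 : (0 : algC) <= sqrtC 3 / 2 by rewrite divr_ge0 ?sqrtC_ge0 ?ler0n.
have s3_real : (sqrtC 3 / 2 : algC) \is Creal by rewrite realE s3_ge0.
have Y3 : (1 + w3) ^+ 3 = -1.
  by rewrite -[LHS]subr0 -(mul0r (w3 + 2)) -w3_root; ring.
have Y9 : (1 + w3) ^+ 9 = -1 by rewrite (exprM _ 3 3) Y3; ring.
have Yrect : 1 + w3 = 1/2 + 'i * (sqrtC 3 / 2) by rewrite /w3; field.
have := rootC_Re_max (isT : (0 < 9)%N) Y9.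
rewrite Yrect Im_rect // Re_rect // => /(_ s3_ge0) le_half.
suff : algRval (1/2) <= 'Re zeta by [].
by rewrite fmorph_div rmorph1 rmorph_nat.
Qed.

(* Otherwise zeta = e^{i pi/3}, and the
   three cube roots of zeta, which are 9th roots of -1 with real part at most
   1/2, would all have negative real part although their sum is 0. *)
Lemma zeta6_neq1 : zeta ^+ 6 != 1.
Proof.
apply/eqP => z6.
have z9 : zeta ^+ 9 = -1 by rewrite rootCK.
have z3 : zeta ^+ 3 = -1 by rewrite -z9 (exprD _ 6 3) z6 mul1r.
have re_z : re zeta = 1/2.
  apply: (triple_neg1 re_zeta_ge_half (unit_circle (isT : (0 < 9)%N) z9)).
  by rewrite -re_cube z3; apply: val_inj; rewrite /= raddfN /= (Creal_ReP _ _) ?rpred1.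
have cube_root_neg u : u ^+ 3 = zeta -> re u < 0.
  move=> u3; have u9 : u ^+ 9 = -1 by rewrite (exprM u 3 3) u3.
  have ab1 := unit_circle (isT : (0 < 9)%N) u9.
  apply: (triple_half_neg _ ab1); last by rewrite -re_cube u3.
  have [im_neg|im_ge0] := ltP (im u) 0.
    apply: (lower_half_le im_neg _ ab1); rewrite -im_cube u3.
    exact: Im_rootC_ge0.
  by rewrite -re_z; apply: rootC_Re_max.
pose t := 3.-root zeta.
have t3 : forall k, (t * w3 ^+ k) ^+ 3 = zeta.
  move=> k; rewrite exprMn rootCK // -exprM mulnC exprM.
  by rewrite w3_cube expr1n mulr1.
have sum0 : re (t * w3 ^+ 0) + re (t * w3 ^+ 1) + re (t * w3 ^+ 2) = 0.
  apply: val_inj.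
  change (algRval (re (t * w3 ^+ 0) + re (t * w3 ^+ 1) + re (t * w3 ^+ 2)) = algRval 0).
  rewrite !rmorphD rmorph0 /= -!raddfD /= -!mulrDr expr0 expr1.
  by rewrite w3_root mulr0 raddf0.
have := cube_root_neg _ (t3 0%N); have := cube_root_neg _ (t3 1%N).
by have := cube_root_neg _ (t3 2%N); lra.
Qed.

Definition up_to_sign (M z : 'M[algC]_3) : Prop := z = M \/ z = - M.

Lemma up_to_sign_mul M N x h :
  up_to_sign M x -> up_to_sign N h -> up_to_sign (M *m N) (x *m h).
Proof.
rewrite /up_to_sign.
by case=> ->; case=> ->; rewrite ?mulNmx ?mulmxN ?opprK; [left | right | right | left].
Qed.

Lemma up_to_sign_exp M z k : ~~ odd k -> up_to_sign M z -> z ^+ k = M ^+ k.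
Proof. by move=> k_even [-> //| ->]; rewrite exprNn -signr_odd (negbTE k_even) mul1r. Qed.

Lemma invmx_pow (h : 'M[algC]_3) k : h ^+ k.+1 = 1 -> invmx h = h ^+ k.
Proof.
move=> hk; have h_hk : h *m h ^+ k = 1%:M by rewrite mulmxE -exprS hk.
have [h_unit _] := mulmx1_unit h_hk.
by rewrite -[RHS]mul1mx -(mulVmx h_unit) -mulmxA h_hk mulmx1.
Qed.

Section CertificateSoundness.
Variables (y : algC) (m n : nat) (S gens : seq mat).
Hypothesis y_cyclo : y ^+ 6 + y ^+ 3 + 1 = 0.
Hypotheses (m_gt0 : (0 < m)%N) (n_gt0 : (0 < n)%N) (m_even : ~~ odd m) (n_even : ~~ odd n).
Hypothesis cert : certificate m n S gens.

Let signed_ev z := exists2 A, A \in S & up_to_sign (ev_mat y A) z.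

Let right_stable h := forall z, signed_ev z -> signed_ev (z *m h).

Lemma cert_one : signed_ev 1%:M.
Proof. by case/andP: cert => one_S _; exists mat1 => //; left; rewrite ev_mat1. Qed.

Lemma cert_exp z : signed_ev z -> z ^+ m = 1 \/ z ^+ n = 1.
Proof.
case=> A AS sA; case/andP: cert => _ /allP/(_ A AS)/andP[_ /orP[] /eqP/(ev_mat_powc y_cyclo)].
  by rewrite ev_mat1 (up_to_sign_exp m_even sA) => <-; left.
by rewrite ev_mat1 (up_to_sign_exp n_even sA) => <-; right.
Qed.

Lemma cert_mul g h : g \in gens -> up_to_sign (ev_mat y g) h -> right_stable h.
Proof.
move=> gG sh z [A AS sA]; case/andP: cert => _ /allP/(_ A AS)/andP[/allP/(_ g gG) + _].
case eAg: (mat_mulc A g) => [B|] // BS; exists B => //.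
by rewrite (ev_mat_mulc y_cyclo eAg); apply: up_to_sign_mul.
Qed.

Lemma right_stable_exp h k : right_stable h -> right_stable (h ^+ k).
Proof.
move=> sh; elim: k => [|k IH] z sz; first by rewrite expr0 mulmx1.
by rewrite exprS -mulmxE mulmxA; apply/IH/sh.
Qed.

Lemma right_stable_inv h : right_stable h -> right_stable (invmx h).
Proof.
move=> sh; have /cert_exp h_exp : signed_ev h by rewrite -[h]mul1mx; apply/sh/cert_one.
have mn_gt0 : (0 < m * n)%N by rewrite muln_gt0 m_gt0.
have hmn : h ^+ (m * n).-1.+1 = 1.
  rewrite prednK //; case: h_exp => hk; first by rewrite exprM hk expr1n.
  by rewrite mulnC exprM hk expr1n.
by rewrite (invmx_pow hmn); apply: right_stable_exp.
Qed.

Lemma certified_exponent (G : seq 'M[algC]_3) :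
  (forall h, h \in G -> exists2 g, g \in gens & up_to_sign (ev_mat y g) h) ->
  forall z, gen_by G z -> z ^+ m = 1 \/ z ^+ n = 1.
Proof.
move=> G_gens z zG; apply: cert_exp.
suff : right_stable z by move/(_ _ cert_one); rewrite mul1mx.
elim: zG => [h /G_gens [g gG sg] | | x w _ sx _ sw | x _ sx].
- exact: cert_mul sg.
- by move=> x; rewrite mulmx1.
- by move=> v /sx /sw; rewrite mulmxA.
- exact: right_stable_inv.
Qed.

End CertificateSoundness.

Lemma zeta18 : zeta ^+ 18 = 1.
Proof. by rewrite (exprM zeta 9 2) rootCK // sqrrN expr1n. Qed.

Lemma zeta_mod18 k : zeta ^+ k = zeta ^+ (k %% 18).
Proof. by rewrite {1}(divn_eq k 18) exprD mulnC exprM zeta18 expr1n mul1r. Qed.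

Definition yz : algC := zeta ^+ 2.

(* y^9 = 1 and y^3 <> 1 since zeta^6 <> 1. *)
Lemma yz_cyclo : yz ^+ 6 + yz ^+ 3 + 1 = 0.
Proof.
have y3 : yz ^+ 3 - 1 != 0 by rewrite subr_eq0 /yz -exprM; exact: zeta6_neq1.
apply: (mulfI y3); rewrite mulr0.
have -> : (yz ^+ 3 - 1) * (yz ^+ 6 + yz ^+ 3 + 1) = yz ^+ 9 - 1 by ring.
by rewrite /yz -exprM zeta18 subrr.
Qed.

Lemma omega_root : omega ^+ 2 + omega + 1 = 0.
Proof. by rewrite -yz_cyclo /omega /yz -!exprM. Qed.

Lemma eq_mod_omega (k p q : algC) : p - q = k * (omega ^+ 2 + omega + 1) -> p = q.
Proof. by move=> h; apply/eqP; rewrite -subr_eq0 h omega_root mulr0. Qed.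

Lemma zr_small :
  (zr 0 = 0) * (zr 1 = 1) * (zr 2 = 2) * (zr 3 = 3) * (zr (-1) = -1) * (zr (-2) = -2).
Proof. by do !split; rewrite -?zrN. Qed.

Lemma Dmx_ev : Dmx = ev_mat yz D0.
Proof.
rewrite /Dmx /ev_mat /ev_cyc /= !zr_small /eps /omega /yz.
by congr mx3; field.
Qed.

(* c_sqrt3 = -(1 + 2 omega)/3 is 1/(i sqrt 3) up to sign. *)
Definition c_sqrt3 : algC := - (1 + 2 * omega) / 3.

Lemma V0_ev : ev_mat yz V0 = c_sqrt3 *: mx3 1 1 1 1 omega (omega ^+ 2) 1 (omega ^+ 2) omega.
Proof.
have yz3 : yz ^+ 3 = omega by rewrite /yz -exprM.
have c_w : c_sqrt3 * omega = (2 + omega) / 3.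
  by apply: (@eq_mod_omega (- 2 / 3)); rewrite /c_sqrt3; field.
have c_w2 : c_sqrt3 * omega ^+ 2 = (omega - 1) / 3.
  by apply: (@eq_mod_omega (- (2 * omega - 1) / 3)); rewrite /c_sqrt3; field.
rewrite mx3_scale c_w c_w2 mulr1 /ev_mat /ev_cyc /= !zr_small yz3 /c_sqrt3.
by congr mx3; field.
Qed.

(* Both 1 + 2 omega and i sqrt 3 square to -3. *)
Lemma inv_i_sqrt3 : ('i * sqrtC 3)^-1 = c_sqrt3 \/ ('i * sqrtC 3)^-1 = - c_sqrt3.
Proof.
set v := 'i * sqrtC 3; set u := 1 + 2 * omega.
have u2 : u ^+ 2 = -3.
  have -> : u ^+ 2 = -3 + 4 * (omega ^+ 2 + omega + 1) by rewrite /u; ring.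
  by rewrite omega_root mulr0 addr0.
have v2 : v ^+ 2 = -3 by rewrite exprMn sqrCi sqrtCK mulN1r.
have u_neq0 : u != 0.
  by apply/eqP => u0; move: u2; rewrite u0 expr0n /= => /esym/eqP; rewrite oppr_eq0 pnatr_eq0.
have u_inv : u^-1 = c_sqrt3.
  have uc : u * c_sqrt3 = 1.
    have -> : u * c_sqrt3 = - u ^+ 2 / 3 by rewrite /c_sqrt3 -/u; ring.
    by rewrite u2 opprK divff // pnatr_eq0.
  by rewrite -[c_sqrt3](mulKf u_neq0) uc mulr1.
have : (v - u) * (v + u) = 0.
  have -> : (v - u) * (v + u) = v ^+ 2 - u ^+ 2 by ring.
  by rewrite v2 u2 subrr.
move/eqP; rewrite mulf_eq0 => /orP[] /eqP.
  by move/subr0_eq ->; left.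
by move/eqP; rewrite addr_eq0 => /eqP ->; right; rewrite invrN u_inv.
Qed.

(* V is the value of its code up to sign: the sign of sqrt is not determined
   algebraically, and [up_to_sign] makes it irrelevant. *)
Lemma Vmx_ev : up_to_sign (ev_mat yz V0) Vmx.
Proof.
rewrite /up_to_sign /Vmx V0_ev.
by case: inv_i_sqrt3 => ->; [left | right; rewrite scaleNr].
Qed.

Lemma sigma_exponent z : Sigma216x3 z -> z ^+ 12 = 1 \/ z ^+ 18 = 1.
Proof.
apply: (certified_exponent yz_cyclo _ _ _ _ sigma_certificate) => // h.
rewrite !inE => /orP[] /eqP ->.
  by exists D0; rewrite ?inE ?eqxx //; left; exact: Dmx_ev.
by exists V0; [rewrite !inE eqxx orbT | exact: Vmx_ev].
Qed.

Lemma diag_pow (a b c : algC) k :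
  mx3 a 0 0 0 b 0 0 0 c ^+ k = mx3 (a ^+ k) 0 0 0 (b ^+ k) 0 0 0 (c ^+ k).
Proof.
elim: k => [|k IH]; first by rewrite !expr0 mx3_1.
by rewrite exprS IH -mulmxE mx3_mul !exprS; congr mx3; ring.
Qed.

Definition g36 : 'M[algC]_3 := G1 *m FUM.

Lemma g36_in_Fr : Fr162x4 g36.
Proof. by apply: gen_mul; apply: gen_mem; rewrite !inE eqxx ?orbT. Qed.

Lemma g36_sq : g36 ^+ 2 = mx3 (- zeta ^+ 8) 0 0 0 (zeta ^+ 2) 0 0 0 (- zeta ^+ 8).
Proof.
rewrite -[zeta ^+ 8]/(zeta ^+ (26 %% 18)) -[zeta ^+ 2]/(zeta ^+ (20 %% 18)) -!zeta_mod18.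
rewrite expr2 -mulmxE /g36 /G1 /FUM /Jmx /omega /e7 /e4 mx3_scale !mx3_mul.
by congr mx3; ring.
Qed.

Lemma mx3_diag_eq1 (a b c : algC) : mx3 a 0 0 0 b 0 0 0 c = 1%:M -> a = 1 /\ b = 1.
Proof.
move/matrixP => h; split; first by have := h ord0 ord0; rewrite !mxE.
by have := h (lift ord0 ord0) (lift ord0 ord0); rewrite !mxE.
Qed.

(* The (2,2) entry of g36^12 is zeta^12 <> 1. *)
Lemma g36_pow12 : g36 ^+ 12 != 1.
Proof.
apply/eqP; rewrite (exprM g36 2 6) g36_sq diag_pow => /mx3_diag_eq1[_].
rewrite -exprM => z12; move: zeta6_neq1.
by rewrite -zeta18 (exprD zeta 12 6) z12 mul1r eqxx.
Qed.

(* The (1,1) entry of g36^18 is (-zeta^8)^9 = -1. *)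
Lemma g36_pow18 : g36 ^+ 18 != 1.
Proof.
apply/eqP; rewrite (exprM g36 2 9) g36_sq diag_pow => /mx3_diag_eq1[+ _].
rewrite exprNn -exprM (_ : zeta ^+ (8 * 9) = 1); last by rewrite zeta_mod18 expr0.
rewrite mulr1 -signr_odd /= expr1 => /eqP.
by rewrite -subr_eq0 -opprD oppr_eq0 -[1 + 1]/(2%:R : algC) pnatr_eq0.
Qed.

(* An isomorphism preserves the identities z^m = 1 and z^n = 1 back and forth;
   it maps 1 to 1 because an idempotent of finite order is trivial. *)
Lemma idempotent_eq1 (e : 'M[algC]_3) k : e *m e = e -> e ^+ k.+1 = 1 -> e = 1.
Proof.
move=> ee <-; elim: k => [|k IH]; first by rewrite expr1.
by rewrite exprS -IH -mulmxE ee.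
Qed.

Lemma iso_exponent (A B : 'M[algC]_3 -> Prop) m n :
  isomorphic A B -> A 1%:M -> (forall x y, A x -> A y -> A (x *m y)) ->
  (forall z, B z -> z ^+ m = 1 \/ z ^+ n = 1) -> (0 < m)%N -> (0 < n)%N ->
  forall x, A x -> x ^+ m = 1 \/ x ^+ n = 1.
Proof.
move=> [f [fB [fM [f_inj _]]]] A1 AM expB m_gt0 n_gt0.
have f1 : f 1 = 1.
  have ff : f 1 *m f 1 = f 1 by rewrite -fM // mul1mx.
  case: (expB _ (fB _ A1)); [rewrite -(prednK m_gt0) | rewrite -(prednK n_gt0)];
    exact: idempotent_eq1.
have Apow x k : A x -> A (x ^+ k).
  by move=> Ax; elim: k => [|k IH]; [exact: A1 | rewrite exprS; apply: AM].
have fpow x k : A x -> f (x ^+ k) = f x ^+ k.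
  move=> Ax; elim: k => [|k IH]; first by rewrite !expr0.
  by rewrite !exprS -mulmxE fM ?IH //; apply: Apow.
move=> x Ax; have f_eq1 k : f x ^+ k = 1 -> x ^+ k = 1.
  by move=> fk; apply: f_inj; [exact: Apow | exact: A1 | rewrite fpow // fk f1].
by case: (expB _ (fB _ Ax)) => /f_eq1; [left | right].
Qed.

(* g36 would satisfy g36^12 = 1 or g36^18 = 1. *)
Theorem theorem9 : ~ isomorphic Fr162x4 Sigma216x3.
Proof.
move=> iso.
have := iso_exponent iso (gen_one _) (@gen_mul _) sigma_exponent isT isT g36_in_Fr.
by case=> /eqP; rewrite ?(negbTE g36_pow12) ?(negbTE g36_pow18).
Qed.
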